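(* Let $R$ be a commutative ring with $\mathbb{Q}\subseteq R$, $\mathcal{A}$ a commutative unital $R$-algebra, and $\mathcal{E}$ a finitely generated projective $\mathcal{A}$-module with a symmetric, strongly nondegenerate, full $\mathcal{A}$-bilinear form $\langle\cdot,\cdot\rangle$. Let $\omega\in\Omega^r_{\mathcal{C}}(\mathcal{E})$ with $r\ge2$. Then there exist unique maps $\pi^{(p)}_\omega\in\operatorname{SDer}^p(\mathcal{A},\Omega^{r-2p}_{\mathcal{C}}(\mathcal{E}))$, one for each $p$ with $0\le2p\le r$, with two properties: (i) $\pi^{(0)}_\omega=\omega$; (ii) for every $p$ with $2(p+1)\le r$ and all $a_1,\dots,a_p\in\mathcal{A}$, the map $\pi^{(p+1)}_\omega(a_1,\dots,a_p,\cdot)$ is the symbol of $\pi^{(p)}_\omega(a_1,\dots,a_p)$. Concretely, $\pi^{(p+1)}_\omega(a_1,\dots,a_p,a)(x_1,\dots,x_{r-2p-2})=\sigma_{\pi^{(p)}_\omega(a_1,\dots,a_p)}(x_1,\dots,x_{r-2p-2})(a)$ for all $a\in\mathcal{A}$ and $x_i\in\mathcal{E}$.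
   Context: Strongly nondegenerate: $\mathcal{E}\to\operatorname{Hom}_{\mathcal{A}}(\mathcal{E},\mathcal{A})$ is an isomorphism. Full: every $a\in\mathcal{A}$ is a finite sum $\sum_i\langle x_i,y_i\rangle$. $\operatorname{Der}(\mathcal{A})$: $R$-linear derivations of $\mathcal{A}$. $\Omega^0_{\mathcal{C}}(\mathcal{E})=\mathcal{A}$. For $r\ge1$, $\Omega^r_{\mathcal{C}}(\mathcal{E})$ is the set of $\omega\in\operatorname{Hom}_R(\mathcal{E}^{\otimes_R r},\mathcal{A})$ satisfying two conditions: (a) $\omega(x_1,\dots,x_{r-1},ax_r)=a\,\omega(x_1,\dots,x_r)$ for all $a\in\mathcal{A}$; (b) if $r\ge2$, there is an $R$-multilinear map $\sigma_\omega:\mathcal{E}^{\otimes_R(r-2)}\to\operatorname{Der}(\mathcal{A})$ (the symbol of $\omega$) such that, for all $1\le i\le r-1$, $\omega(\dots,x_i,x_{i+1},\dots)+\omega(\dots,x_{i+1},x_i,\dots)=\sigma_\omega(x_1,\dots,\widehat{x_i},\widehat{x_{i+1}},\dots,x_r)\langle x_i,x_{i+1}\rangle$. The symbol is uniquely determined by fullness. For an $\mathcal{A}$-module $\mathcal{F}$, $\operatorname{SDer}^p(\mathcal{A},\mathcal{F})$ is the set of $R$-multilinear maps $\mathcal{A}^{\otimes_R p}\to\mathcal{F}$ that are symmetric and a derivation in each entry. By convention $\operatorname{SDer}^0(\mathcal{A},\mathcal{F})=\mathcal{F}$. *)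

From HB Require Import structures.
From mathcomp Require Import all_boot all_order all_algebra.
From mathcomp Require Import perm.
Set Implicit Arguments.
Unset Strict Implicit.
Unset Printing Implicit Defensive.
Import GRing.Theory.
Local Open Scope ring_scope.

Section Defs.

Variable R : comUnitRingType.
Variable A : comAlgType R.
Variable E : lmodType A.

(* "Q is contained in R": every positive integer is invertible in R. *)
Definition contains_rat (R' : unitRingType) : Prop :=
  forall n : nat, (n.+1)%:R \is a @GRing.unit R'.

Definition xat (V : zmodType) (n : nat) (x : 'I_n -> V) (k : nat) : V :=
  match insub k with Some i => x i | None => 0 end.

Definition upd (V : Type) (n : nat) (x : 'I_n -> V) (i : 'I_n) (v : V) : 'I_n -> V :=
  fun j => if j == i then v else x j.

Definition swap_adj (V : zmodType) (n : nat) (x : 'I_n -> V) (i : nat) : 'I_n -> V :=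
  fun j => xat x (if val j == i then i.+1 else if val j == i.+1 then i else val j).

Definition remove2 (V : zmodType) (n : nat) (x : 'I_n -> V) (i : nat) : 'I_(n - 2) -> V :=
  fun j => xat x (if (val j < i)%N then val j else (val j).+2).

Definition snoc_fun (V : Type) (p : nat) (a : 'I_p -> V) (c : V) : 'I_p.+1 -> V :=
  fun j => if unlift ord_max j is Some j' then a j' else c.

Definition Alinear (f : E -> A) : Prop :=
  forall (a : A) (u v : E), f (a *: u + v) = a * f u + f v.

Definition symmetric_bform (b : E -> E -> A) : Prop :=
  forall x y, b x y = b y x.

Definition Abilinear (b : E -> E -> A) : Prop :=
  (forall z, Alinear (b ^~ z)) /\ (forall x, Alinear (b x)).

(* E -> Hom_A(E, A), x |-> <x, .> is an isomorphism *)
Definition strongly_nondegenerate (b : E -> E -> A) : Prop :=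
  (forall x x', (forall y, b x y = b x' y) -> x = x') /\
  (forall phi : E -> A, Alinear phi -> exists x, forall y, phi y = b x y).

Definition full_form (b : E -> E -> A) : Prop :=
  forall a : A, exists s : seq (E * E), a = \sum_(q <- s) b q.1 q.2.

(* finitely generated projective: a direct summand of some A^n *)
Definition fg_projective : Prop :=
  exists n : nat, exists (f : 'rV[A]_n -> E) (g : E -> 'rV[A]_n),
    (forall (a : A) u v, f (a *: u + v) = a *: f u + f v) /\
    (forall (a : A) u v, g (a *: u + v) = a *: g u + g v) /\
    cancel g f.

Definition is_derivation (D : A -> A) : Prop :=
  (forall (c : R) (a a' : A), D (c *: a + a') = c *: D a + D a') /\
  (forall a a' : A, D (a * a') = a * D a' + D a * a').

Definition multilinearR (n : nat) (w : ('I_n -> E) -> A) : Prop :=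
  forall (x : 'I_n -> E) (i : 'I_n) (c : R) (u v : E),
    w (upd x i ((c%:A : A) *: u + v)) = c *: w (upd x i u) + w (upd x i v).

Definition is_symbol (b : E -> E -> A) (n : nat) (w : ('I_n -> E) -> A)
    (sigma : ('I_(n - 2) -> E) -> A -> A) : Prop :=
  (forall y, is_derivation (sigma y)) /\
  (forall (y : 'I_(n - 2) -> E) (k : 'I_(n - 2)) (c : R) (u v : E) (a : A),
     sigma (upd y k ((c%:A : A) *: u + v)) a
       = c *: sigma (upd y k u) a + sigma (upd y k v) a) /\
  (forall (x : 'I_n -> E) (i : nat), (i.+1 < n)%N ->
     w (swap_adj x i) + w x = sigma (remove2 x i) (b (xat x i) (xat x i.+1))).

(* Omega^n_C(E).  For n = 0 the conditions are vacuous: ('I_0 -> E) -> A is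
   (up to function extensionality) just A. *)
Definition is_Omega (b : E -> E -> A) (n : nat) (w : ('I_n -> E) -> A) : Prop :=
  (0 < n)%N ->
  [/\ multilinearR w,
      (forall (x : 'I_n -> E) (i : 'I_n) (a : A), (val i).+1 = n ->
         w (upd x i (a *: x i)) = a * w x)
    & (1 < n)%N -> exists sigma, is_symbol b w sigma].

Definition is_SDer_Omega (b : E -> E -> A) (p n : nat)
    (pi : ('I_p -> A) -> ('I_n -> E) -> A) : Prop :=
  [/\ forall a, is_Omega b (pi a),
      forall (s : {perm 'I_p}) (a : 'I_p -> A) (x : 'I_n -> E),
        pi (fun j => a (s j)) x = pi a x,
      forall (a : 'I_p -> A) (i : 'I_p) (c : R) (u v : A) (x : 'I_n -> E),
        pi (upd a i (c *: u + v)) x = c *: pi (upd a i u) x + pi (upd a i v) x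
    & forall (a : 'I_p -> A) (i : 'I_p) (u v : A) (x : 'I_n -> E),
        pi (upd a i (u * v)) x = u * pi (upd a i v) x + v * pi (upd a i u) x].

Definition is_pi_family (b : E -> E -> A) (r : nat) (w : ('I_r -> E) -> A)
    (pi : forall p : nat, ('I_p -> A) -> ('I_(r - p.*2) -> E) -> A) : Prop :=
  [/\ forall p : nat, (p.*2 <= r)%N -> is_SDer_Omega b (pi p),
      forall (a : 'I_0 -> A) (x : 'I_(r - 0.*2) -> E),
        pi 0%N a x = w (fun j : 'I_r => xat x (val j))
    & forall p : nat, ((p.+1).*2 <= r)%N -> forall a : 'I_p -> A,
        is_symbol b (pi p a)
          (fun (y : 'I_(r - p.*2 - 2) -> E) (c : A) =>
             pi p.+1 (snoc_fun a c) (fun j => xat y (val j)))].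

End Defs.

(* Condition (ii) forces pi^(p+1)(a_1, ..., a_p, a) to be the symbol of
   pi^(p)(a_1, ..., a_p) evaluated at a, so everything rests on symbols being
   unique.  Fullness gives this: writing c = \sum_k <u_k, v_k>, the symbol
   relation on the first two slots forces
     sigma(y)(c) = \sum_k w(v_k, u_k, y) + w(u_k, v_k, y).
   The right-hand side is a sum of shifted copies of w, so y |-> sigma(y)(c) is
   again a form in Omega, whose symbol is the sum of the shifted copies of
   sigma.  Computing that symbol once by expanding c and once by the formula
   above (expanding its own argument d) shows that it is symmetric in c and d;
   with invariance under permutations fixing the last entry this yields the
   symmetry of pi^(p).  Linearity and the Leibniz rule in the entries come from
   the formula being linear in w and from symbols being derivations. *)

From mathcomp Require Import all_boot all_algebra perm zify.
From Stdlib Require Import ClassicalEpsilon FunctionalExtensionality.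
Set Implicit Arguments. Unset Strict Implicit. Unset Printing Implicit Defensive.
Import GRing.Theory.
Local Open Scope ring_scope.

Section Tuples.
Variable V : zmodType.

Lemma xat_val n (x : 'I_n -> V) (j : 'I_n) : xat x (val j) = x j.
Proof. by rewrite /xat; case: insubP => [k _ /val_inj ->|]; rewrite ?ltn_ord. Qed.

Lemma xat_out n (x : 'I_n -> V) k : (n <= k)%N -> xat x k = 0.
Proof. by rewrite /xat; case: insubP => [k' |] //= _ <-; rewrite leqNgt ltn_ord. Qed.

Lemma xat_id n (x : 'I_n -> V) : (fun j : 'I_n => xat x (val j)) = x.
Proof. by apply: functional_extensionality => j; rewrite xat_val. Qed.

Lemma xatK n m (x : 'I_n -> V) : m = n ->
  (fun j : 'I_n => xat (fun k : 'I_m => xat x (val k)) (val j)) = x.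
Proof. by move=> e; subst m; rewrite !xat_id. Qed.

Lemma xat_upd n (x : 'I_n -> V) i v k :
  xat (upd x i v) k = if k == val i then v else xat x k.
Proof.
rewrite /xat /upd; case: insubP => [j _ <-|]; first by rewrite (inj_eq val_inj).
by case: eqP => // ->; rewrite ltn_ord.
Qed.

Lemma xat_swap_adj n (x : 'I_n -> V) i k :
  xat (swap_adj x i) k = if (k < n)%N then
    xat x (if k == i then i.+1 else if k == i.+1 then i else k) else 0.
Proof. by rewrite {1}/xat; case: insubP => [j -> <-|/negbTE ->]. Qed.

Lemma xat_remove2 n (x : 'I_n -> V) i k :
  xat (remove2 x i) k =
    if (k < n - 2)%N then xat x (if (k < i)%N then k else k.+2) else 0.
Proof. by rewrite {1}/xat; case: insubP => [j -> <-|/negbTE ->]. Qed.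

Definition cons2 n (u v : V) (y : 'I_(n - 2) -> V) : 'I_n -> V :=
  fun j => match val j with 0 => u | 1 => v | k.+2 => xat y k end.

Lemma xat_cons2 n u v (y : 'I_(n - 2) -> V) k :
  xat (cons2 u v y) k =
    if (k < n)%N then match k with 0 => u | 1 => v | k.+2 => xat y k end else 0.
Proof. by rewrite /xat; case: insubP => [j -> <-|/negbTE ->]. Qed.

Lemma xat_cons2_0 n u v (y : 'I_(n - 2) -> V) : (0 < n)%N -> xat (cons2 u v y) 0 = u.
Proof. by move=> hn; rewrite xat_cons2 hn. Qed.

Lemma xat_cons2_1 n u v (y : 'I_(n - 2) -> V) : (1 < n)%N -> xat (cons2 u v y) 1 = v.
Proof. by move=> hn; rewrite xat_cons2 hn. Qed.

Lemma xat_cons2_S n u v (y : 'I_(n - 2) -> V) k : xat (cons2 u v y) k.+2 = xat y k.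
Proof. by rewrite xat_cons2; case: ifP => // hk; rewrite xat_out //; lia. Qed.

Lemma swap_adj_cons2_0 n u v (y : 'I_(n - 2) -> V) : (1 < n)%N ->
  swap_adj (cons2 u v y) 0 = cons2 v u y.
Proof.
move=> hn; apply: functional_extensionality => -[[|[|k]] hk];
  rewrite /swap_adj /cons2 /= xat_cons2 //= ?hn ?hk //; rewrite ifT //; lia.
Qed.

Lemma swap_adj_cons2_S n u v (y : 'I_(n - 2) -> V) j : (j.+1 < n - 2)%N ->
  swap_adj (cons2 u v y) j.+2 = cons2 u v (swap_adj y j).
Proof.
move=> hj; apply: functional_extensionality => -[[|[|k]] hk];
  rewrite /swap_adj /cons2 /= xat_cons2 /=; try by rewrite (leq_trans _ hk).
have hk' : (k < n - 2)%N by lia.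
rewrite xat_swap_adj !eqSS hk'.
have [kj|_] := eqVneq k j; first by subst k; rewrite ifT //; lia.
by have [kj|_] := eqVneq k j.+1; [subst k|]; rewrite ifT //; lia.
Qed.

Lemma remove2_cons2_0 n u v (y : 'I_(n - 2) -> V) : remove2 (cons2 u v y) 0 = y.
Proof.
apply: functional_extensionality => -[k hk].
by rewrite /remove2 /= xat_cons2 ifT ?(xat_val y (Ordinal hk)) //; lia.
Qed.

Lemma remove2_cons2_S n u v (y : 'I_(n - 2) -> V) j :
  remove2 (cons2 u v y) j.+2 = cons2 u v (remove2 y j).
Proof.
apply: functional_extensionality => -[[|[|k]] hk];
  rewrite {1}/remove2 /cons2 /= xat_cons2 /=; try by rewrite ifT //; lia.
have hk' : (k < n - 2 - 2)%N by lia.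
rewrite xat_remove2 !ltnS hk'.
by case: (ltnP k j) => hkj; rewrite ifT //; lia.
Qed.

Lemma upd_cons2 n u v (y : 'I_(n - 2) -> V) (k : 'I_(n - 2)) (k' : 'I_n) e :
  val k' = (val k).+2 -> upd (cons2 u v y) k' e = cons2 u v (upd y k e).
Proof.
move=> hk'; apply: functional_extensionality => -[[|[|m]] hm];
  by rewrite /upd /cons2 -(inj_eq val_inj) /= hk' // !eqSS xat_upd.
Qed.

End Tuples.

Section Derivations.
Variables (R : comUnitRingType) (A : comAlgType R).

Lemma derivationD (D : A -> A) : is_derivation D -> {morph D : a a' / a + a'}.
Proof. by case=> D_lin _ a a'; rewrite -[a in LHS]scale1r D_lin scale1r. Qed.

Lemma derivation0 (D : A -> A) : is_derivation D -> D 0 = 0.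
Proof. by move=> hD; apply: (addrI (D 0)); rewrite -derivationD // !addr0. Qed.

Lemma derivation_sum (D : A -> A) (I : Type) (s : seq I) (f : I -> A) :
  is_derivation D -> D (\sum_(i <- s) f i) = \sum_(i <- s) D (f i).
Proof. by move=> hD; rewrite (big_morph D (derivationD hD) (derivation0 hD)). Qed.

Lemma derivation_add (D1 D2 : A -> A) :
  is_derivation D1 -> is_derivation D2 -> is_derivation (fun a => D1 a + D2 a).
Proof.
case=> l1 m1 [l2 m2]; split=> [c a a'|a a'].
  by rewrite l1 l2 scalerDr addrACA.
by rewrite m1 m2 mulrDr mulrDl addrACA.
Qed.

Lemma derivation_sumr (I : Type) (s : seq I) (D : I -> A -> A) :
  (forall i, is_derivation (D i)) -> is_derivation (fun a => \sum_(i <- s) D i a).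
Proof.
move=> hD; split=> [c a a'|a a'].
  by rewrite scaler_sumr -big_split; apply: eq_bigr => i _; rewrite (hD i).1.
by rewrite mulr_sumr mulr_suml -big_split; apply: eq_bigr => i _; rewrite (hD i).2.
Qed.

End Derivations.

Section Symbols.
Variables (R : comUnitRingType) (A : comAlgType R) (E : lmodType A).
Variable b : E -> E -> A.
Hypothesis b_full : full_form b.

Definition decomp (c : A) : seq (E * E) :=
  epsilon (inhabits [::]) (fun s => c = \sum_(q <- s) b q.1 q.2).

Lemma decomp_sum c : c = \sum_(q <- decomp c) b q.1 q.2.
Proof. exact: (epsilon_spec _ (fun s => c = \sum_(q <- s) b q.1 q.2) (b_full c)). Qed.

Lemma derivation_decomp (D : A -> A) c :
  is_derivation D -> D c = \sum_(q <- decomp c) D (b q.1 q.2).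
Proof. by move=> hD; rewrite {1}(decomp_sum c) derivation_sum. Qed.

(* If [c = \sum_k b u_k v_k], the relation of a symbol on the first two slots
   forces this value at [c] (see [symbolE]). *)
Definition symbol_of n (w : ('I_n -> E) -> A) : ('I_(n - 2) -> E) -> A -> A :=
  fun y c => \sum_(q <- decomp c) (w (cons2 q.2 q.1 y) + w (cons2 q.1 q.2 y)).

Lemma symbol_pair n (w : ('I_n -> E) -> A) s : (1 < n)%N -> is_symbol b w s ->
  forall y u v, s y (b u v) = w (cons2 v u y) + w (cons2 u v y).
Proof.
move=> hn [_ [_ s_swap]] y u v.
have := s_swap (cons2 u v y) 0 hn.
by rewrite swap_adj_cons2_0 // remove2_cons2_0 xat_cons2_0 ?xat_cons2_1 // ltnW.
Qed.

Lemma symbolE n (w : ('I_n -> E) -> A) s : (1 < n)%N -> is_symbol b w s ->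
  s = symbol_of w.
Proof.
move=> hn hs; apply: functional_extensionality => y.
apply: functional_extensionality => c; rewrite (derivation_decomp c (hs.1 y)).
by apply: eq_bigr => q _; rewrite (symbol_pair hn hs).
Qed.

Lemma is_symbol_of n (w : ('I_n -> E) -> A) : (1 < n)%N -> is_Omega b w ->
  is_symbol b w (symbol_of w).
Proof.
move=> hn hw; have [_ _ /(_ hn) [s hs]] := hw (ltnW hn).
by rewrite -(symbolE hn hs).
Qed.

Lemma symbol_of_comb n (w w1 w2 : ('I_n -> E) -> A) (al be : A) :
  (forall x, w x = al * w1 x + be * w2 x) ->
  forall y c, symbol_of w y c = al * symbol_of w1 y c + be * symbol_of w2 y c.
Proof.
move=> hw y c; rewrite /symbol_of !mulr_sumr -big_split.
by apply: eq_bigr => q _ /=; rewrite !hw !mulrDr addrACA.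
Qed.

Lemma is_symbol_add n (w1 w2 : ('I_n -> E) -> A) s1 s2 :
  is_symbol b w1 s1 -> is_symbol b w2 s2 ->
  is_symbol b (fun x => w1 x + w2 x) (fun y c => s1 y c + s2 y c).
Proof.
move=> [d1 [l1 h1]] [d2 [l2 h2]]; split; [|split].
- by move=> y; apply: derivation_add.
- by move=> y k c u v a; rewrite l1 l2 scalerDr addrACA.
- by move=> x i hi; rewrite -h1 // -h2 // addrACA.
Qed.

Lemma is_symbol_sum n (I : Type) (s : seq I) (w : I -> ('I_n -> E) -> A) sigma :
  (forall i, is_symbol b (w i) (sigma i)) ->
  is_symbol b (fun x => \sum_(i <- s) w i x) (fun y c => \sum_(i <- s) sigma i y c).
Proof.
move=> hs; split; [|split].
- by move=> y; apply: derivation_sumr => i; exact: (hs i).1.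
- move=> y k c u v a; rewrite scaler_sumr -big_split.
  by apply: eq_bigr => i _ /=; rewrite (hs i).2.1.
- move=> x j hj; rewrite -big_split.
  by apply: eq_bigr => i _ /=; rewrite (hs i).2.2.
Qed.

Lemma is_symbol_cons2 n (w : ('I_n -> E) -> A) s u v : is_symbol b w s ->
  is_symbol b (fun y : 'I_(n - 2) -> E => w (cons2 u v y)) (fun z => s (cons2 u v z)).
Proof.
move=> [s_der [s_lin s_swap]]; split; [|split].
- by move=> z; exact: s_der.
- move=> z k c u' v' a.
  have hk : (k.+2 < n - 2)%N by have := ltn_ord k; lia.
  by rewrite -!(upd_cons2 _ _ _ (k' := Ordinal hk)) // s_lin.
- move=> y i hi.
  rewrite -swap_adj_cons2_S // -remove2_cons2_S -(xat_cons2_S u v y i).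
  by rewrite -(xat_cons2_S u v y i.+1) s_swap //; lia.
Qed.

Lemma is_symbol_eval n (w : ('I_n -> E) -> A) s c : (1 < n)%N -> is_symbol b w s ->
  is_symbol b (fun y => s y c)
    (fun z d => \sum_(q <- decomp c) (s (cons2 q.2 q.1 z) d + s (cons2 q.1 q.2 z) d)).
Proof.
move=> hn hs.
have -> : (fun y => s y c) =
    (fun y => \sum_(q <- decomp c) (w (cons2 q.2 q.1 y) + w (cons2 q.1 q.2 y))).
  by apply: functional_extensionality => y; rewrite (symbolE hn hs).
apply: is_symbol_sum => q.
by apply: is_symbol_add; apply: is_symbol_cons2.
Qed.

(* [is_symbol_eval] computes this symbol by expanding [c], [symbol_of] by
   expanding [d]; uniqueness of symbols identifies the two. *)
Lemma symbol_of_swap n (w : ('I_n -> E) -> A) s c d z :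
  (1 < n - 2)%N -> is_symbol b w s ->
  symbol_of (fun y => s y c) z d = symbol_of (fun y => s y d) z c.
Proof.
move=> hn hs; have hn' : (1 < n)%N by lia.
by rewrite -(symbolE hn (is_symbol_eval c hn' hs)).
Qed.

Lemma Omega_symbol_eval n (w : ('I_n -> E) -> A) s c : (1 < n)%N ->
  is_Omega b w -> is_symbol b w s -> is_Omega b (fun y => s y c).
Proof.
move=> hn hw hs _; have [_ w_last _] := hw (ltnW hn); split.
- by move=> y k c' u v; exact: hs.2.1.
- move=> y i a /= hi; rewrite !(symbolE hn hs) /symbol_of mulr_sumr.
  have hi' : (i.+2 < n)%N by lia.
  have cons2_last u v : w (cons2 u v (upd y i (a *: y i))) = a * w (cons2 u v y).
    rewrite -(upd_cons2 _ _ _ (k' := Ordinal hi')) //.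
    have -> : y i = cons2 u v y (Ordinal hi') by rewrite /cons2 /= xat_val.
    by rewrite w_last //=; lia.
  by apply: eq_bigr => q _ /=; rewrite (cons2_last q.2) (cons2_last q.1) mulrDr.
- by move=> _; exact: ex_intro _ _ (is_symbol_eval c hn hs).
Qed.

Lemma Omega_cast n m (e : m = n) (w : ('I_n -> E) -> A) :
  is_Omega b w -> is_Omega b (fun x : 'I_m -> E => w (fun j => xat x (val j))).
Proof.
subst m; have -> // : (fun x => w (fun j => xat x (val j))) = w.
by apply: functional_extensionality => x; rewrite xat_id.
Qed.

Lemma symbol_of_cast n m (e : m = n) (w : ('I_n -> E) -> A) z c :
  symbol_of (fun x : 'I_m -> E => w (fun j => xat x (val j))) z c =
  symbol_of w (fun j => xat z (val j)) c.
Proof.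
subst m; rewrite xat_id; have -> // : (fun x => w (fun j => xat x (val j))) = w.
by apply: functional_extensionality => x; rewrite xat_id.
Qed.

End Symbols.

Section Permutations.
Variables (T U : Type).

Lemma perm_fix_max n (s : {perm 'I_n.+1}) : s ord_max = ord_max ->
  exists s' : {perm 'I_n}, forall j, s (lift ord_max j) = lift ord_max (s' j).
Proof.
move=> s_max; pose f j := odflt j (unlift ord_max (s (lift ord_max j))).
have f_lift j : s (lift ord_max j) = lift ord_max (f j).
  rewrite /f; case: unliftP => [k -> //|/= s_j].
  by have := neq_lift ord_max j; rewrite -(inj_eq (@perm_inj _ s)) s_j s_max eqxx.
have f_inj : injective f.
  by move=> j k e; apply: (@lift_inj _ ord_max); apply: (@perm_inj _ s); rewrite !f_lift e.
by exists (perm f_inj) => j; rewrite permE f_lift.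
Qed.

(* The permutations fixing the last point, together with the transposition of
   the last two points, generate all permutations. *)
Lemma perm_invariant_of_last n (f : ('I_n.+2 -> T) -> U) :
  (forall (s : {perm 'I_n.+2}) a, s ord_max = ord_max -> f (fun j => a (s j)) = f a) ->
  (forall a, f (fun j => a (tperm (lift ord_max ord_max) ord_max j)) = f a) ->
  forall (s : {perm 'I_n.+2}) a, f (fun j => a (s j)) = f a.
Proof.
move=> f_fix f_swap; set pen : 'I_n.+2 := lift ord_max ord_max.
have pen_max : pen != ord_max by rewrite eq_sym neq_lift.
have f_tperm k a : f (fun j => a (tperm k ord_max j)) = f a.
  have [->|k_max] := eqVneq k ord_max.
    by congr f; apply: functional_extensionality => j; rewrite tperm1 perm1.
  have [->|k_pen] := eqVneq k pen; first exact: f_swap.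
  have tperm_conj j : tperm k ord_max j = tperm pen ord_max (tperm k pen (tperm pen ord_max j)).
    have -> : tperm k ord_max = (tperm k pen ^ tperm pen ord_max)%g.
      by rewrite tpermJ tpermL tpermD // eq_sym.
    by rewrite -{1}(tpermK pen ord_max j) permJ.
  transitivity (f (fun i => a (tperm pen ord_max (tperm k pen i)))).
    rewrite -(f_swap (fun i => a (tperm pen ord_max (tperm k pen i)))).
    by congr f; apply: functional_extensionality => j; rewrite tperm_conj.
  transitivity (f (fun i => a (tperm pen ord_max i))); last exact: f_swap.
  by apply: (f_fix (tperm k pen)); rewrite tpermD // eq_sym.
move=> s a; set k := s ord_max.
transitivity (f (fun i => a (tperm k ord_max i))); last exact: f_tperm.
rewrite -(f_fix (s * tperm k ord_max)%g (fun i => a (tperm k ord_max i))).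
  by congr f; apply: functional_extensionality => j; rewrite permM tpermK.
by rewrite permM tpermL.
Qed.

End Permutations.

Section Snoc.
Variable V : Type.

Definition init p (a : 'I_p.+1 -> V) : 'I_p -> V := fun j => a (lift ord_max j).

Lemma init_snoc p (a : 'I_p -> V) c : init (snoc_fun a c) = a.
Proof. by apply: functional_extensionality => j; rewrite /init /snoc_fun liftK. Qed.

Lemma snoc_fun_max p (a : 'I_p -> V) c : snoc_fun a c ord_max = c.
Proof. by rewrite /snoc_fun unlift_none. Qed.

Lemma snoc_init p (a : 'I_p.+1 -> V) : snoc_fun (init a) (a ord_max) = a.
Proof.
apply: functional_extensionality => j; rewrite /snoc_fun /init.
by case: unliftP => [k ->|->].
Qed.

Lemma init_upd_lift p (a : 'I_p.+1 -> V) i x :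
  init (upd a (lift ord_max i) x) = upd (init a) i x.
Proof.
by apply: functional_extensionality => j; rewrite /init /upd (inj_eq lift_inj).
Qed.

Lemma upd_lift_max p (a : 'I_p.+1 -> V) i x :
  upd a (lift ord_max i) x ord_max = a ord_max.
Proof. by rewrite /upd (negbTE (neq_lift _ _)). Qed.

Lemma init_upd_max p (a : 'I_p.+1 -> V) x : init (upd a ord_max x) = init a.
Proof.
apply: functional_extensionality => j.
by rewrite /init /upd eq_sym (negbTE (neq_lift _ _)).
Qed.

Lemma upd_max_max p (a : 'I_p.+1 -> V) x : upd a ord_max x ord_max = x.
Proof. by rewrite /upd eqxx. Qed.

End Snoc.

Section IteratedSymbol.
Variables (R : comUnitRingType) (A : comAlgType R) (E : lmodType A).
Variable b : E -> E -> A.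
Hypothesis b_full : full_form b.
Variables (r : nat) (w : ('I_r -> E) -> A).
Hypothesis w_Omega : is_Omega b w.

Fixpoint iterated_symbol p : ('I_p -> A) -> ('I_(r - p.*2) -> E) -> A :=
  match p with
  | 0 => fun _ x => w (fun j => xat x (val j))
  | q.+1 => fun a y =>
      symbol_of b (iterated_symbol (init a)) (fun j => xat y (val j)) (a ord_max)
  end.

Lemma iterated_symbolE p (a : 'I_p.+1 -> A) y :
  iterated_symbol a y =
  symbol_of b (iterated_symbol (init a)) (fun j => xat y (val j)) (a ord_max).
Proof. by []. Qed.

Lemma iterated_symbol_Omega p : (p.*2 <= r)%N -> forall a : 'I_p -> A,
  is_Omega b (iterated_symbol a).
Proof.
elim: p => [|p IH] hp a.
  have e : (r - 0.*2 = r)%N by lia.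
  exact: (Omega_cast e w_Omega).
have hn : (1 < r - p.*2)%N by lia.
have e : (r - p.+1.*2 = r - p.*2 - 2)%N by lia.
have hp' : (p.*2 <= r)%N by lia.
have a_Omega := IH hp' (init a).
have a_symbol := is_symbol_of b_full hn a_Omega.
exact: (Omega_cast e (Omega_symbol_eval b_full (a ord_max) hn a_Omega a_symbol)).
Qed.

Lemma iterated_symbol_derivation p (a : 'I_p.+1 -> A) y :
  (p.+1.*2 <= r)%N -> is_derivation (fun c => iterated_symbol (upd a ord_max c) y).
Proof.
move=> hp; have hn : (1 < r - p.*2)%N by lia.
have hp' : (p.*2 <= r)%N by lia.
have [s_der _] := is_symbol_of b_full hn (iterated_symbol_Omega hp' (init a)).
under [fun c => _]functional_extensionality => c do
  rewrite iterated_symbolE init_upd_max upd_max_max.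
exact: s_der.
Qed.

Lemma iterated_symbol_linear p : (p.*2 <= r)%N ->
  forall (a : 'I_p -> A) i (c : R) u v x,
  iterated_symbol (upd a i (c *: u + v)) x =
  c *: iterated_symbol (upd a i u) x + iterated_symbol (upd a i v) x.
Proof.
elim: p => [|p IH] hp a i c u v x; first by case: i.
case: (unliftP ord_max i) => [i' ->|->]; last first.
  exact: (iterated_symbol_derivation a x hp).1.
have hp' : (p.*2 <= r)%N by lia.
rewrite !iterated_symbolE !init_upd_lift !upd_lift_max.
rewrite (@symbol_of_comb _ _ _ b _ _ (iterated_symbol (upd (init a) i' u))
                        (iterated_symbol (upd (init a) i' v)) c%:A 1).
  by rewrite mulr_algl mul1r.
by move=> x'; rewrite IH // mulr_algl mul1r.
Qed.

Lemma iterated_symbol_leibniz p : (p.*2 <= r)%N ->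
  forall (a : 'I_p -> A) i u v x,
  iterated_symbol (upd a i (u * v)) x =
  u * iterated_symbol (upd a i v) x + v * iterated_symbol (upd a i u) x.
Proof.
elim: p => [|p IH] hp a i u v x; first by case: i.
case: (unliftP ord_max i) => [i' ->|->]; last first.
  by rewrite (iterated_symbol_derivation a x hp).2 [_ * v]mulrC.
have hp' : (p.*2 <= r)%N by lia.
rewrite !iterated_symbolE !init_upd_lift !upd_lift_max.
by apply: symbol_of_comb => x'; rewrite IH.
Qed.

Lemma iterated_symbol_is_symbol p : (p.+1.*2 <= r)%N -> forall a : 'I_p -> A,
  is_symbol b (iterated_symbol a)
    (fun y c => iterated_symbol (snoc_fun a c) (fun j => xat y (val j))).
Proof.
move=> hp a; have hn : (1 < r - p.*2)%N by lia.
have hp' : (p.*2 <= r)%N by lia.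
have -> : (fun y c => iterated_symbol (snoc_fun a c) (fun j => xat y (val j))) =
    symbol_of b (iterated_symbol a).
  apply: functional_extensionality => y; apply: functional_extensionality => c.
  by rewrite iterated_symbolE init_snoc snoc_fun_max xatK //; lia.
exact: (is_symbol_of b_full hn (iterated_symbol_Omega hp' a)).
Qed.

Lemma iterated_symbol_swap_last q : (q.+2.*2 <= r)%N -> forall a : 'I_q.+2 -> A,
  iterated_symbol (fun j => a (tperm (lift ord_max ord_max) ord_max j)) =
  iterated_symbol a.
Proof.
move=> hq a; set t := tperm _ _; apply: functional_extensionality => y.
have e : (r - q.+1.*2 = r - q.*2 - 2)%N by lia.
have hn : (1 < r - q.*2)%N by lia.
have hn2 : (1 < r - q.*2 - 2)%N by lia.
have hq0 : (q.*2 <= r)%N by lia.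
have init2_t : init (init (fun j => a (t j))) = init (init a).
  apply: functional_extensionality => j.
  by rewrite /init tpermD // ?(inj_eq lift_inj) neq_lift.
pose S := symbol_of b (iterated_symbol (init (init a))).
have unfold_init a' : init (init a') = init (init a) ->
    iterated_symbol (init a') = fun y' => S (fun j => xat y' (val j)) (init a' ord_max).
  by move=> a'_a; apply: functional_extensionality => y'; rewrite iterated_symbolE a'_a.
rewrite !iterated_symbolE !unfold_init // /init tpermR tpermL.
rewrite (@symbol_of_cast _ _ _ b _ _ e (fun y' => S y' (a (lift ord_max ord_max)))).
rewrite (@symbol_of_cast _ _ _ b _ _ e (fun y' => S y' (a ord_max))).
have S_symbol := is_symbol_of b_full hn (iterated_symbol_Omega hq0 (init (init a))).
exact: (symbol_of_swap b_full _ _ _ hn2 S_symbol).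
Qed.

Lemma iterated_symbol_perm p : (p.*2 <= r)%N ->
  forall (s : {perm 'I_p}) (a : 'I_p -> A),
  iterated_symbol (fun j => a (s j)) = iterated_symbol a.
Proof.
elim: p => [|[|q] IH] hp s a //.
  by congr iterated_symbol; apply: functional_extensionality => j; rewrite !ord1.
apply: perm_invariant_of_last => {s a} [s a s_max|]; last exact: iterated_symbol_swap_last.
have [s' s_lift] := perm_fix_max s_max.
apply: functional_extensionality => y; rewrite !iterated_symbolE s_max.
have -> : init (fun j => a (s j)) = (fun j => init a (s' j)).
  by apply: functional_extensionality => j; rewrite /init s_lift.
by rewrite (IH _ s' (init a)) //; lia.
Qed.

Lemma pi_family_unique pi : is_pi_family b w pi ->
  forall p, (p.*2 <= r)%N -> forall a : 'I_p -> A, pi p a = iterated_symbol a.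
Proof.
move=> [_ pi0 piS]; elim=> [|p IH] hp a.
  by apply: functional_extensionality => x; rewrite pi0.
have hn : (1 < r - p.*2)%N by lia.
have hp' : (p.*2 <= r)%N by lia.
apply: functional_extensionality => y.
rewrite iterated_symbolE -(IH hp' (init a)) -(symbolE b_full hn (piS p hp (init a))) /=.
by rewrite snoc_init xatK //; lia.
Qed.

End IteratedSymbol.

Theorem mainTheorem8 (R : comUnitRingType) (A : comAlgType R) (E : lmodType A)
  (b : E -> E -> A) (r : nat) (w : ('I_r -> E) -> A) :
  contains_rat R ->
  fg_projective E ->
  Abilinear b -> symmetric_bform b -> strongly_nondegenerate b -> full_form b ->
  (2 <= r)%N -> is_Omega b w ->
  exists pi : forall p : nat, ('I_p -> A) -> ('I_(r - p.*2) -> E) -> A,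
    is_pi_family b w pi /\
    (forall pi' : forall p : nat, ('I_p -> A) -> ('I_(r - p.*2) -> E) -> A,
       is_pi_family b w pi' ->
       forall p : nat, (p.*2 <= r)%N ->
       forall (a : 'I_p -> A) (x : 'I_(r - p.*2) -> E), pi' p a x = pi p a x).
Proof.
move=> _ _ _ _ _ b_full _ w_Omega.
have pi_family : is_pi_family b w (@iterated_symbol _ _ _ b r w).
  split=> [p hp||]; last exact: iterated_symbol_is_symbol.
  - split=> [a|s a x|a i c u v x|a i u v x].
    + exact: iterated_symbol_Omega.
    + by rewrite iterated_symbol_perm.
    + exact: iterated_symbol_linear.
    + exact: iterated_symbol_leibniz.
  - by [].
exists (@iterated_symbol _ _ _ b r w); split=> // pi' pi'_family p hp a x.
by rewrite (pi_family_unique b_full pi'_family).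
Qed.
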